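(* Let $\mathcal A$ be an abelian category. Let $0\to F\xrightarrow{i} M\xrightarrow{d} M/F\to 0$ be a fully invariant short exact sequence and $0\to G\xrightarrow{j} M\xrightarrow{p} M/G\to 0$ a short exact sequence in $\mathcal A$. (1) Let $u:F\cap G\to G$ be the inclusion monomorphism. (i) If the second short exact sequence is also fully invariant, then the inclusion monomorphism $ju:F\cap G\to M$ is fully invariant. (ii) If every morphism $G\to G$ can be extended to a morphism $M\to M$, then $u:F\cap G\to G$ is fully invariant. (2) Let $q:M/G\to M/(F+G)$ be the induced epimorphism. (i) If the second short exact sequence is also fully invariant, then the induced epimorphism $qp:M\to M/(F+G)$ is fully coinvariant. (ii) If every morphism $M/G\to M/G$ can be lifted to a morphism $M\to M$, then $q:M/G\to M/(F+G)$ is fully coinvariant.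
   Context: A monomorphism $i:K\to M$ in an abelian category is called fully invariant if for every morphism $h:M\to M$ there is a morphism $\alpha:K\to K$ with $hi=i\alpha$. An epimorphism $d:M\to C$ is called fully coinvariant if for every morphism $h:M\to M$ there is $\beta:C\to C$ with $dh=\beta d$. A short exact sequence $0\to F\xrightarrow{i} M\xrightarrow{d} C\to 0$ is called fully invariant if $i$ is fully invariant (equivalently, $d$ is fully coinvariant). *)

From mathcomp Require Import all_boot all_algebra.
Set Implicit Arguments. Unset Strict Implicit. Unset Printing Implicit Defensive.
Import GRing.Theory.
Local Open Scope ring_scope.

Record preadd := PreAdd {
  Obj : Type;
  Mor : Obj -> Obj -> zmodType;
  comp : forall A B C : Obj, Mor B C -> Mor A B -> Mor A C;
  idm : forall A : Obj, Mor A A;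
  compA : forall A B C D (f : Mor C D) (g : Mor B C) (h : Mor A B),
      comp f (comp g h) = comp (comp f g) h;
  comp1m : forall A B (f : Mor A B), comp (idm B) f = f;
  compm1 : forall A B (f : Mor A B), comp f (idm A) = f;
  compDl : forall A B C (f g : Mor B C) (h : Mor A B),
      comp (f + g) h = comp f h + comp g h;
  compDr : forall A B C (f : Mor B C) (g h : Mor A B),
      comp f (g + h) = comp f g + comp f h
}.
Arguments comp {p A B C}.
Arguments idm {p}.
Notation "f \oc g" := (comp f g) (at level 40, left associativity).

Section Preds.
Variable C : preadd.

Definition mono (A B : Obj C) (f : Mor A B) : Prop :=
  forall X (g h : Mor X A), f \oc g = f \oc h -> g = h.
Definition epi (A B : Obj C) (f : Mor A B) : Prop :=
  forall X (g h : Mor B X), g \oc f = h \oc f -> g = h.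

Definition is_kernel (A B K : Obj C) (f : Mor A B) (k : Mor K A) : Prop :=
  f \oc k = 0 /\
  forall X (g : Mor X A), f \oc g = 0 -> exists! h : Mor X K, k \oc h = g.
Definition is_cokernel (A B Q : Obj C) (f : Mor A B) (c : Mor B Q) : Prop :=
  c \oc f = 0 /\
  forall X (g : Mor B X), g \oc f = 0 -> exists! h : Mor Q X, h \oc c = g.

Definition short_exact (F M Q : Obj C) (i : Mor F M) (d : Mor M Q) : Prop :=
  is_kernel d i /\ is_cokernel i d.

Definition fully_invariant (K M : Obj C) (i : Mor K M) : Prop :=
  mono i /\ forall h : Mor M M, exists a : Mor K K, h \oc i = i \oc a.
Definition fully_coinvariant (M Q : Obj C) (d : Mor M Q) : Prop :=
  epi d /\ forall h : Mor M M, exists b : Mor Q Q, d \oc h = b \oc d.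

Definition fully_invariant_ses (F M Q : Obj C) (i : Mor F M) (d : Mor M Q)
  : Prop := short_exact i d /\ fully_invariant i.

Definition is_pullback (F G M P : Obj C) (i : Mor F M) (j : Mor G M)
    (v : Mor P F) (u : Mor P G) : Prop :=
  i \oc v = j \oc u /\
  forall X (a : Mor X F) (b : Mor X G), i \oc a = j \oc b ->
    exists! h : Mor X P, v \oc h = a /\ u \oc h = b.

Definition is_pushout (M Q1 Q2 Q : Obj C) (d : Mor M Q1) (p : Mor M Q2)
    (r : Mor Q1 Q) (q : Mor Q2 Q) : Prop :=
  r \oc d = q \oc p /\
  forall X (a : Mor Q1 X) (b : Mor Q2 X), a \oc d = b \oc p ->
    exists! h : Mor Q X, h \oc r = a /\ h \oc q = b.
End Preds.

Record abelian := Abelian {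
  ab_pa :> preadd;
  ab_zero : exists Z : Obj ab_pa,
      forall A, (forall f : Mor A Z, f = 0) /\ (forall f : Mor Z A, f = 0);
  ab_biprod : forall A B : Obj ab_pa, exists (S : Obj ab_pa)
      (i1 : Mor A S) (i2 : Mor B S) (p1 : Mor S A) (p2 : Mor S B),
      [/\ p1 \oc i1 = idm A, p2 \oc i2 = idm B, p1 \oc i2 = 0, p2 \oc i1 = 0
        & i1 \oc p1 + i2 \oc p2 = idm S];
  ab_kernel : forall (A B : Obj ab_pa) (f : Mor A B),
      exists (K : Obj ab_pa) (k : Mor K A), is_kernel f k;
  ab_cokernel : forall (A B : Obj ab_pa) (f : Mor A B),
      exists (Q : Obj ab_pa) (c : Mor B Q), is_cokernel f c;
  ab_mono_normal : forall (A B : Obj ab_pa) (f : Mor A B),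
      mono f -> exists (Q : Obj ab_pa) (g : Mor B Q), is_kernel g f;
  ab_epi_normal : forall (A B : Obj ab_pa) (f : Mor A B),
      epi f -> exists (K : Obj ab_pa) (g : Mor K A), is_cokernel g f
}.

From Pilot Require Import Defs.
From mathcomp Require Import all_boot all_algebra.

(* F ∩ G is the pullback of i and j, M/(F+G) the pushout of d and p.  An
   endomorphism h of M with h i = i a and h j = j b gives a compatible pair
   (a v, b u) over the pullback, hence an endomorphism c of F ∩ G with
   u c = b u; this yields (1)(i), and (1)(ii) once h is chosen to extend a
   given b.  Full invariance of i makes its cokernel d fully coinvariant, and
   part (2) is part (1) read in the opposite category. *)

Set Implicit Arguments. Unset Strict Implicit. Unset Printing Implicit Defensive.
Import GRing.Theory.
Local Open Scope ring_scope.

Definition opposite (C : preadd) : preadd :=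
  @PreAdd (Obj C) (fun A B => Mor B A) (fun A B D f g => g \oc f) (@idm C)
    (fun A B D E f g h => esym (Defs.compA h g f))
    (fun A B f => compm1 f) (fun A B f => comp1m f)
    (fun A B D f g h => compDr h f g) (fun A B D f g h => compDl g h f).

Section Limits.
Variable C : preadd.
Implicit Types A B X : Obj C.

Lemma comp0m A B X (f : Mor X A) : (0 : Mor A B) \oc f = 0.
Proof. by apply: (addrI (0 \oc f)); rewrite -compDl !addr0. Qed.

Lemma mono_comp A B X (f : Mor A B) (g : Mor X A) :
  mono f -> mono g -> mono (f \oc g).
Proof. by move=> fm gm Y h k; rewrite -!Defs.compA => /fm /gm. Qed.

Lemma kernel_mono A B K (f : Mor A B) (k : Mor K A) : is_kernel f k -> mono k.
Proof.
move=> [fk0 kerP] X g h kg_kh.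
have fkg0 : f \oc (k \oc g) = 0 by rewrite Defs.compA fk0 comp0m.
have [w [_ w_uniq]] := kerP X _ fkg0.
by rewrite -(w_uniq g erefl) (w_uniq h (esym kg_kh)).
Qed.

Section Pullback.
Variables (F G M P : Obj C) (i : Mor F M) (j : Mor G M).
Variables (v : Mor P F) (u : Mor P G).
Hypothesis pbP : is_pullback i j v u.

Lemma pullback_mono : mono i -> mono u.
Proof.
case: pbP => iv_ju univ im X g h ug_uh.
have iv_ju_g : i \oc (v \oc g) = j \oc (u \oc g) by rewrite !Defs.compA iv_ju.
have [w [_ w_uniq]] := univ X _ _ iv_ju_g.
rewrite -(w_uniq g (conj erefl erefl)); apply: w_uniq; split=> //.
by apply: im; rewrite !Defs.compA iv_ju -!Defs.compA ug_uh.
Qed.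

Lemma pullback_induced_endo (h : Mor M M) (a : Mor F F) (b : Mor G G) :
  h \oc i = i \oc a -> h \oc j = j \oc b -> exists c : Mor P P, b \oc u = u \oc c.
Proof.
case: pbP => iv_ju univ hi hj.
have compat : i \oc (a \oc v) = j \oc (b \oc u).
  by rewrite !Defs.compA -hi -hj -!Defs.compA iv_ju.
have [c [[_ uc] _]] := univ _ _ _ compat.
by exists c; rewrite uc.
Qed.

Lemma fully_invariant_pullback :
  fully_invariant i -> fully_invariant j -> fully_invariant (j \oc u).
Proof.
move=> [im iinv] [jm jinv]; split; first exact: mono_comp (pullback_mono im).
move=> h; have [a hi] := iinv h; have [b hj] := jinv h.
have [c uc] := pullback_induced_endo hi hj.
by exists c; rewrite Defs.compA hj -!Defs.compA uc.
Qed.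

Lemma fully_invariant_pullback_of_extendable :
  fully_invariant i -> (forall b : Mor G G, exists h : Mor M M, h \oc j = j \oc b) ->
  fully_invariant u.
Proof.
move=> [im iinv] extend; split; first exact: pullback_mono.
move=> b; have [h hj] := extend b; have [a hi] := iinv h.
exact: pullback_induced_endo hi hj.
Qed.

End Pullback.

End Limits.

(* In [opposite C] the notions [is_pushout], [epi], [is_cokernel] and
   [fully_coinvariant] of [C] unfold to [is_pullback], [mono], [is_kernel]
   and [fully_invariant]. *)
Section Colimits.
Variable C : preadd.
Implicit Types A B X : Obj C.

Lemma cokernel_epi A B Q (f : Mor A B) (c : Mor B Q) : is_cokernel f c -> epi c.
Proof. exact: (@kernel_mono (opposite C)). Qed.

Section Pushout.
Variables (M MF MG Q : Obj C) (d : Mor M MF) (p : Mor M MG).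
Variables (r : Mor MF Q) (q : Mor MG Q).
Hypothesis poP : is_pushout d p r q.

Lemma fully_coinvariant_pushout :
  fully_coinvariant d -> fully_coinvariant p -> fully_coinvariant (q \oc p).
Proof. exact: (@fully_invariant_pullback (opposite C) _ _ _ _ _ _ _ _ poP). Qed.

Lemma fully_coinvariant_pushout_of_liftable :
  fully_coinvariant d -> (forall b : Mor MG MG, exists h : Mor M M, p \oc h = b \oc p) ->
  fully_coinvariant q.
Proof.
exact: (@fully_invariant_pullback_of_extendable (opposite C) _ _ _ _ _ _ _ _ poP).
Qed.

End Pushout.

Lemma cokernel_fully_coinvariant (F M Q : Obj C) (i : Mor F M) (d : Mor M Q) :
  fully_invariant i -> is_cokernel i d -> fully_coinvariant d.
Proof.
move=> [_ iinv] coker; split; first exact: cokernel_epi coker.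
move=> h; have [a hi] := iinv h; case: coker => di0 cokerP.
have dh_i0 : (d \oc h) \oc i = 0 by rewrite -Defs.compA hi Defs.compA di0 comp0m.
by have [b [db _]] := cokerP _ _ dh_i0; exists b.
Qed.

End Colimits.

Theorem proposition2p7 (C : abelian) (F G M MF MG : Obj C)
  (i : Mor F M) (d : Mor M MF) (j : Mor G M) (p : Mor M MG)
  (H1 : fully_invariant_ses i d) (H2 : short_exact j p)
  (P : Obj C) (v : Mor P F) (u : Mor P G) (Hpb : is_pullback i j v u)
  (Q : Obj C) (r : Mor MF Q) (q : Mor MG Q) (Hpo : is_pushout d p r q) :
  ((fully_invariant_ses j p -> fully_invariant (j \oc u)) /\
   ((forall g : Mor G G, exists h : Mor M M, h \oc j = j \oc g) ->
      fully_invariant u)) /\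
  ((fully_invariant_ses j p -> fully_coinvariant (q \oc p)) /\
   ((forall g : Mor MG MG, exists h : Mor M M, p \oc h = g \oc p) ->
      fully_coinvariant q)).
Proof.
case: H1 => [[_ d_coker] i_inv].
have d_coinv := cokernel_fully_coinvariant i_inv d_coker.
split; split.
- case=> _ j_inv; exact: fully_invariant_pullback Hpb i_inv j_inv.
- exact: fully_invariant_pullback_of_extendable Hpb i_inv.
- case=> [[_ p_coker] j_inv].
  exact: fully_coinvariant_pushout Hpo d_coinv (cokernel_fully_coinvariant j_inv p_coker).
- exact: fully_coinvariant_pushout_of_liftable Hpo d_coinv.
Qed.
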